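(* Let $\Sigma=(I,X,\mathcal U,\phi,Y,h)$ be a forward complete control system with outputs. Then the following are equivalent: (1) $\Sigma$ is OUAG and BORS; (2) $\Sigma$ is OGUAG and OUGB; (3) $\Sigma$ is OCAG. Moreover, any of these properties implies that $\Sigma$ is IOpS.
   Context: Let $I\in\{\mathbb N_0,\mathbb R_0^+\}$. A forward complete control system with outputs $\Sigma=(I,X,\mathcal U,\phi,Y,h)$ consists of: a normed space $(X,\|\cdot\|_X)$; a vector space $U$ and a normed linear subspace $(\mathcal U,\|\cdot\|_{\mathcal U})$ of $\{u:I\to U\}$ such that for all $u\in\mathcal U$ and $\tau\in I$, $u(\cdot+\tau)\in\mathcal U$ with $\|u(\cdot+\tau)\|_{\mathcal U}\le\|u\|_{\mathcal U}$, and for all $t_2\ge t_1\ge 0$ the function $u|_{[t_1,t_2]}$ (equal to $u$ on $[t_1,t_2]$, $0$ elsewhere) lies in $\mathcal U$ with $\|u|_{[t_1,t_2]}\|_{\mathcal U}\le\|u\|_{\mathcal U}$; a map $\phi:I\times X\times\mathcal U\to X$ with $\phi(0,x,u)=x$, causality (if $u,\tilde u$ agree on $[0,t]$ then $\phi(t,x,u)=\phi(t,x,\tilde u)$), and cocycle property $\phi(t+s,x,u)=\phi(s,\phi(t,x,u),u(t+\cdot))$; a normed space $Y$ and $h:X\times U\to Y$. Write $y(t,x,u)=h(\phi(t,x,u),u(t))$, $B_r=\{x:\|x\|_X<r\}$, $B_{r,\mathcal U}=\{u:\|u\|_{\mathcal U}<r\}$. $\mathcal K,\mathcal K_\infty,\mathcal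 L,\mathcal{KL}$ are the standard comparison function classes ($\mathcal K$: continuous, strictly increasing, zero at zero; $\mathcal K_\infty$: unbounded $\mathcal K$; $\mathcal{KL}$: $\mathcal K$ in first argument, continuous decreasing to $0$ in the second). OUAG: $\exists\gamma\in\mathcal K_\infty$ such that for all $\varepsilon,r,s>0$ there is $\tau\in I$ with $\|y(t,x,u)\|_Y\le\varepsilon+\gamma(\|u\|_{\mathcal U})$ for all $x\in B_r,u\in B_{s,\mathcal U},t\ge\tau$. OGUAG: $\exists\gamma\in\mathcal K_\infty$ such that for all $\varepsilon,r>0$ there is $\tau\in I$ with $\|y(t,x,u)\|_Y\le\varepsilon+\gamma(\|u\|_{\mathcal U})$ for all $x\in B_r,u\in\mathcal U,t\ge\tau$. BORS: for all $C>0,\tau\in I$: $\sup\{\|y(t,x,u)\|_Y:\|x\|_X<C,\|u\|_{\mathcal U}<C,t<\tau\}<\infty$. OUGB: $\exists\sigma,\gamma\in\mathcal K_\infty,c>0$ with $\|y(t,x,u)\|_Y\le\sigma(\|x\|_X)+\gamma(\|u\|_{\mathcal U})+c$ for all $x,u,t$. OCAG: $\exists\beta\in\mathcal{KL},\gamma\in\mathcal K_\infty,c\ge0$ with $\|y(t,x,u)\|_Y\le\beta(\|x\|_X+c,t)+\gamma(\|u\|_{\mathcal U})$ for all $x,u,t$. IOpS: $\exists\beta\in\mathcal{KL},\gamma\in\mathcal K_\infty,c\ge0$ with $\|y(t,x,u)\|_Y\le\beta(\|x\|_X,t)+\gamma(\|u\|_{\mathcal U})+c$ for all $x,u,t$.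 *)

From HB Require Import structures.
From mathcomp Require Import all_boot all_order all_algebra.
From mathcomp Require Import all_classical all_reals all_analysis.
Set Implicit Arguments. Unset Strict Implicit. Unset Printing Implicit Defensive.
Import Order.TTheory GRing.Theory Num.Theory.
Import numFieldNormedType.Exports.
Local Open Scope classical_set_scope.
Local Open Scope ring_scope.

Section Defs.
Variable R : realType.

(* Time set I: disc = true  ->  I = N_0 (embedded in R as {0,1,2,...});
               disc = false ->  I = R_0^+ . *)
Definition time_pred (disc : bool) (x : R) : Prop :=
  if disc then exists n : nat, x = n%:R else 0 <= x.

Definition time (disc : bool) := {x : R | time_pred disc x}.

Lemma time_pred0 disc : time_pred disc 0.
Proof. by case: disc => /=; [exists 0%N|]. Qed.

Lemma time_predD disc a b :
  time_pred disc a -> time_pred disc b -> time_pred disc (a + b).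
Proof.
case: disc => /=; last exact: addr_ge0.
by move=> [n ->] [m ->]; exists (n + m)%N; rewrite natrD.
Qed.

Definition t0 disc : time disc := exist _ 0 (time_pred0 disc).
Definition tadd disc (t s : time disc) : time disc :=
  exist _ (sval t + sval s) (time_predD (proj2_sig t) (proj2_sig s)).

Variables (disc : bool) (X : normedModType R) (U : lmodType R) (Y : normedModType R).

Definition shift (u : time disc -> U) (tau : time disc) : time disc -> U :=
  fun s => u (tadd tau s).
Definition restr (u : time disc -> U) (t1 t2 : time disc) : time disc -> U :=
  fun s => if (sval t1 <= sval s) && (sval s <= sval t2) then u s else 0.

Definition input_space (Uset : set (time disc -> U))
    (nu : (time disc -> U) -> R) : Prop :=
  [/\ Uset (fun _ => 0),
      (forall u v, Uset u -> Uset v -> Uset (fun t => u t + v t)) &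
      (forall (a : R) u, Uset u -> Uset (fun t => a *: u t))] /\
  [/\ (forall u, Uset u -> 0 <= nu u /\ (nu u = 0 <-> u = fun _ => 0)),
      (forall (a : R) u, Uset u -> nu (fun t => a *: u t) = `|a| * nu u) &
      (forall u v, Uset u -> Uset v -> nu (fun t => u t + v t) <= nu u + nu v)] /\
  (forall u tau, Uset u -> Uset (shift u tau) /\ nu (shift u tau) <= nu u) /\
      (forall u t1 t2, Uset u -> sval t1 <= sval t2 ->
          Uset (restr u t1 t2) /\ nu (restr u t1 t2) <= nu u).

(* forward complete control system (phi is total on I x X x Uset) *)
Definition control_system (Uset : set (time disc -> U))
    (nu : (time disc -> U) -> R) (phi : time disc -> X -> (time disc -> U) -> X) : Prop :=
  [/\ input_space Uset nu,
      (forall x u, Uset u -> phi (t0 disc) x u = x),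
      (forall t x u v, Uset u -> Uset v ->
          (forall s : time disc, sval s <= sval t -> u s = v s) ->
          phi t x u = phi t x v) &
      (forall t s x u, Uset u ->
          phi (tadd t s) x u = phi s (phi t x u) (shift u t))].

Definition yout (phi : time disc -> X -> (time disc -> U) -> X) (h : X -> U -> Y)
  (t : time disc) (x : X) (u : time disc -> U) : Y := h (phi t x u) (u t).

End Defs.

Section Comparison.
Variable R : realType.

Definition classK (g : R -> R) : Prop :=
  [/\ {within [set x : R | 0 <= x], continuous g}, g 0 = 0 &
      (forall a b, 0 <= a -> a < b -> g a < g b)].

Definition classKinf (g : R -> R) : Prop :=
  classK g /\ (forall M : R, exists a, 0 <= a /\ M <= g a).

Definition classKL (b : R -> R -> R) : Prop :=
  (forall t, 0 <= t -> classK (fun r => b r t)) /\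
  (forall r, 0 <= r ->
     [/\ {within [set t : R | 0 <= t], continuous (b r)},
         (forall s t, 0 <= s -> s <= t -> b r t <= b r s) &
         b r t @[t --> +oo] --> 0]).
End Comparison.

Section Props.
Variables (R : realType) (disc : bool) (X : normedModType R) (U : lmodType R)
  (Y : normedModType R) (Uset : set (time R disc -> U))
  (nu : (time R disc -> U) -> R) (phi : time R disc -> X -> (time R disc -> U) -> X)
  (h : X -> U -> Y).

Let y := yout phi h.

Definition OUAG : Prop :=
  exists gamma : R -> R, classKinf gamma /\
  forall eps r s : R, 0 < eps -> 0 < r -> 0 < s ->
  exists tau : time R disc, forall x u t,
    `|x| < r -> Uset u -> nu u < s -> sval tau <= sval t ->
    `|y t x u| <= eps + gamma (nu u).

Definition OGUAG : Prop :=
  exists gamma : R -> R, classKinf gamma /\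
  forall eps r : R, 0 < eps -> 0 < r ->
  exists tau : time R disc, forall x u t,
    `|x| < r -> Uset u -> sval tau <= sval t ->
    `|y t x u| <= eps + gamma (nu u).

Definition BORS : Prop :=
  forall (C : R) (tau : time R disc), 0 < C ->
  exists M : R, forall x u t,
    `|x| < C -> Uset u -> nu u < C -> sval t < sval tau -> `|y t x u| <= M.

Definition OUGB : Prop :=
  exists (sigma gamma : R -> R) (c : R), classKinf sigma /\ classKinf gamma /\ 0 < c /\
  forall x u t, Uset u -> `|y t x u| <= sigma `|x| + gamma (nu u) + c.

Definition OCAG : Prop :=
  exists (beta : R -> R -> R) (gamma : R -> R) (c : R),
  classKL beta /\ classKinf gamma /\ 0 <= c /\
  forall x u t, Uset u -> `|y t x u| <= beta (`|x| + c) (sval t) + gamma (nu u).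

Definition IOpS : Prop :=
  exists (beta : R -> R -> R) (gamma : R -> R) (c : R),
  classKL beta /\ classKinf gamma /\ 0 <= c /\
  forall x u t, Uset u -> `|y t x u| <= beta `|x| (sval t) + gamma (nu u) + c.
End Props.

(* OUAG and BORS together bound the output uniformly on bounded sets of states and
   inputs; a K_oo function dominating these bounds (built by piecewise-linear
   interpolation) gives OUGB, and OUGB upgrades OUAG to OGUAG because inputs too large
   for OUAG are covered by the growth bound itself.
   For OGUAG + OUGB => OCAG, divide the excess |y| - gamma(|u|) of the output over the
   gain by a K function k(|x| + 1) that grows faster than the OUGB bound: the quotient
   is at most 1 and tends to 0 as t -> oo, uniformly in x and u, so its supremum over
   later times is majorized by a continuous decreasing l > 0 tending to 0, and
   beta(r, t) = k(r) l(t) with c = 1 works.  OCAG directly gives OGUAG and OUGB, and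
   k(|x| + 1) <= k(2|x|) + k(2) turns the same estimate into IOpS. *)

From Pilot Require Import Defs.
From HB Require Import structures.
From mathcomp Require Import all_boot all_order all_algebra.
From mathcomp Require Import all_classical all_reals all_analysis.
From mathcomp Require Import lra.
Set Implicit Arguments. Unset Strict Implicit. Unset Printing Implicit Defensive.
Import Order.TTheory GRing.Theory Num.Theory.
Import numFieldNormedType.Exports.
Local Open Scope classical_set_scope.
Local Open Scope ring_scope.

Section PiecewiseLinear.
Variable R : realType.
Implicit Types (s t : R) (p : nat -> R).

Definition clamp01 s : R := Num.min (Num.max s 0) 1.

Lemma clamp01_le0 s : s <= 0 -> clamp01 s = 0.
Proof. by move=> s0; rewrite /clamp01 max_r // min_l. Qed.

Lemma clamp01_ge1 s : 1 <= s -> clamp01 s = 1.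
Proof. by move=> s1; rewrite /clamp01 max_l ?min_r // (le_trans ler01). Qed.

Lemma clamp01_id s : 0 <= s -> s <= 1 -> clamp01 s = s.
Proof. by move=> s0 s1; rewrite /clamp01 max_l // min_l. Qed.

Lemma clamp01_le s t : s <= t -> clamp01 s <= clamp01 t.
Proof. by move=> st; rewrite /clamp01 le_min2 ?le_max2. Qed.

Lemma continuous_clamp01 : continuous clamp01.
Proof.
move=> x; apply: (@continuous_min R R (fun s => Num.max s 0) (fun=> 1)).
  by apply: (@continuous_max R R id (fun=> 0)); [exact: cvg_id | exact: cvg_cst].
exact: cvg_cst.
Qed.

Definition pwlin_sum p (N : nat) t : R :=
  \sum_(0 <= k < N) (p k.+1 - p k) * clamp01 (t - k%:R).

Definition pwlin p t : R := p 0%N + pwlin_sum p (Num.truncn t).+1 t.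

Lemma pwlin_sum_widen p N M t : (N <= M)%N -> t <= N%:R ->
  pwlin_sum p M t = pwlin_sum p N t.
Proof.
move=> NM tN; rewrite /pwlin_sum (big_cat_nat (leq0n N) NM) /=.
rewrite [X in _ + X]big1_seq ?addr0 // => k /andP[_].
rewrite mem_index_iota => /andP[Nk _].
by rewrite clamp01_le0 ?mulr0 // subr_le0 (le_trans tN) // ler_nat.
Qed.

Lemma pwlinE p N t : t <= N%:R -> pwlin p t = p 0%N + pwlin_sum p N t.
Proof.
move=> tN; rewrite /pwlin; congr (_ + _).
have [NS|SN] := leqP N (Num.truncn t).+1; first exact: pwlin_sum_widen.
by rewrite (pwlin_sum_widen p (ltnW SN) (ltW (truncnS_gt t))).
Qed.

Lemma continuous_pwlin_sum p N : continuous (pwlin_sum p N).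
Proof.
elim: N => [|N IH] x.
  have -> : pwlin_sum p 0 = fun=> 0 by apply/funext => t; rewrite /pwlin_sum big_geq.
  exact: cvg_cst.
have -> : pwlin_sum p N.+1 =
    fun t => pwlin_sum p N t + (p N.+1 - p N) * clamp01 (t - N%:R).
  by apply/funext => t; rewrite /pwlin_sum big_nat_recr.
apply: cvgD; first exact: IH.
apply: cvgM; first exact: cvg_cst.
apply: (@continuous_comp R R R (fun t => t - N%:R) clamp01); last exact: continuous_clamp01.
by apply: cvgB; [exact: cvg_id | exact: cvg_cst].
Qed.

Lemma continuous_pwlin p : continuous (pwlin p).
Proof.
move=> x; set N := (Num.truncn x).+1.
have near_x : {near x, (fun t => p 0%N + pwlin_sum p N t) =1 pwlin p}.
  by apply: filterS (lt_le_nbhsl (truncnS_gt x)) => t tN; rewrite (pwlinE p tN).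
apply: cvg_trans (near_eq_cvg near_x) _.
rewrite (@pwlinE p N x) ?ltW ?truncnS_gt //.
by apply: cvgD; [exact: cvg_cst | exact: continuous_pwlin_sum].
Qed.

Lemma pwlin_segment p (k : nat) t : k%:R <= t -> t <= k.+1%:R ->
  pwlin p t = p k + (p k.+1 - p k) * (t - k%:R).
Proof.
move=> kt tk; rewrite (@pwlinE p k.+1 t) // /pwlin_sum big_nat_recr //=.
rewrite clamp01_id ?subr_ge0 //; last by move: tk; rewrite -natr1; lra.
have -> : \sum_(0 <= i < k) (p i.+1 - p i) * clamp01 (t - i%:R) =
          \sum_(0 <= i < k) (p i.+1 - p i).
  apply: eq_big_nat => i /andP[_ ik]; rewrite clamp01_ge1 ?mulr1 //.
  have : i.+1%:R <= k%:R :> R by rewrite ler_nat.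
  by rewrite -natr1; lra.
by rewrite telescope_sumr // addrA [p 0%N + _]addrC subrK.
Qed.

Lemma pwlin_nat p (k : nat) : pwlin p k%:R = p k.
Proof. by rewrite (@pwlin_segment p k) ?subrr ?mulr0 ?addr0 // ler_nat. Qed.

Lemma pwlin_le p s t : (forall k, p k <= p k.+1) -> s <= t -> pwlin p s <= pwlin p t.
Proof.
move=> p_up st; have tN := ltW (truncnS_gt t).
rewrite (pwlinE p tN) (pwlinE p (le_trans st tN)) lerD2l.
apply: ler_sum_nat => i _; apply: ler_wpM2l; first by rewrite subr_ge0.
by apply: clamp01_le; rewrite lerD2r.
Qed.

Lemma pwlin_ge p s t : (forall k, p k.+1 <= p k) -> s <= t -> pwlin p t <= pwlin p s.
Proof.
move=> p_down st; have tN := ltW (truncnS_gt t).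
rewrite (pwlinE p tN) (pwlinE p (le_trans st tN)) lerD2l.
apply: ler_sum_nat => i _; apply: ler_wnM2l; first by rewrite subr_le0.
by apply: clamp01_le; rewrite lerD2r.
Qed.

Lemma pwlin_lt p s t : (forall k, p k < p k.+1) -> 0 <= s -> s < t ->
  pwlin p s < pwlin p t.
Proof.
move=> p_up s0 st; set k := Num.truncn s.
have /andP[ks sk] := truncn_itv s0.
have dp : 0 < p k.+1 - p k by rewrite subr_gt0.
rewrite (@pwlin_segment p k s) //; last exact: ltW.
have [tk|kt] := lerP t k.+1%:R.
  rewrite (@pwlin_segment p k t) // ?(le_trans ks (ltW st)) //.
  by rewrite ltrD2l ltr_pM2l // ltrD2r.
apply: (@lt_le_trans _ _ (p k.+1)).
  by rewrite -ltrBrDl -[X in _ < X]mulr1 ltr_pM2l //; move: sk; rewrite -natr1; lra.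
by rewrite -pwlin_nat; apply: pwlin_le (ltW kt) => j; exact: ltW.
Qed.

End PiecewiseLinear.

Section ComparisonFunctions.
Variable R : realType.
Implicit Types (f g : R -> R) (a b : R).

Lemma classK_le g a b : classK g -> 0 <= a -> a <= b -> g a <= g b.
Proof.
move=> [_ _ g_up] a0; rewrite le_eqVlt => /predU1P[-> //|ab].
exact/ltW/g_up.
Qed.

Lemma classK_ge0 g a : classK g -> 0 <= a -> 0 <= g a.
Proof. by move=> gK a0; have [_ <- _] := gK; exact: classK_le. Qed.

Lemma classK_max g a b : classK g -> 0 <= a -> 0 <= b ->
  g (Num.max a b) <= g a + g b.
Proof.
move=> gK a0 b0; have := classK_ge0 gK a0; have := classK_ge0 gK b0.
by have [] := leP a b; lra.
Qed.

Lemma classKinf_add f g : classKinf f -> classKinf g -> classKinf (f \+ g).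
Proof.
move=> [[f_cont f0 f_up] f_unb] [[g_cont g0 g_up] _]; split; first split.
- by move=> x; apply: cvgD; [exact: f_cont | exact: g_cont].
- by rewrite /= f0 g0 addr0.
- by move=> a b a0 ab; apply: ltrD; [exact: f_up | exact: g_up].
move=> M; have [a [a0 Ma]] := f_unb M; exists a; split => //.
by rewrite -[M]addr0 lerD // (@classK_ge0 g a).
Qed.

Lemma classKinf_id : classKinf (@id R).
Proof.
split; first split => //; first by apply: continuous_subspaceT => x; exact: cvg_id.
by move=> M; exists `|M|; rewrite ler_norm.
Qed.

Lemma classKinf_pwlin (p : nat -> R) : p 0%N = 0 -> (forall k, p k < p k.+1) ->
  (forall k, k%:R <= p k) -> classKinf (pwlin p).
Proof.
move=> p0 p_up p_ge; split; first split.
- exact/continuous_subspaceT/continuous_pwlin.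
- by rewrite -[0]/(0%:R) pwlin_nat.
- by move=> a b a0 ab; apply: pwlin_lt.
move=> M; exists (Num.truncn `|M|).+1%:R; split => //.
rewrite pwlin_nat (le_trans _ (p_ge _)) // (le_trans (ler_norm M)) // ltW //.
exact: truncnS_gt.
Qed.

Fixpoint dominating_seq (A : nat -> R) (k : nat) : R :=
  if k is k'.+1 then dominating_seq A k' + `|A k| + 1 else 0.

Lemma dominating_seq_lt A k : dominating_seq A k < dominating_seq A k.+1.
Proof. by rewrite /= -addrA ltrDl ltr_wpDl. Qed.

Lemma dominating_seq_ge_nat A k : k%:R <= dominating_seq A k.
Proof. by elim: k => [//|k IH] /=; rewrite -natr1 lerD // ler_wpDr. Qed.

Lemma dominating_seq_ge A k : (0 < k)%N -> A k <= dominating_seq A k.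
Proof.
case: k => [//|k] _ /=; rewrite -addrA ler_wpDl ?(le_trans _ (dominating_seq_ge_nat A k)) //.
by rewrite ler_wpDr // ler_norm.
Qed.

Lemma classKinf_majorant (A : nat -> R) : exists sg, [/\ classKinf sg, continuous sg &
  forall (n : nat) m, n%:R <= m -> A n <= sg m + `|A 0%N|].
Proof.
exists (pwlin (dominating_seq A)); split.
- by apply: classKinf_pwlin => //; [exact: dominating_seq_lt | exact: dominating_seq_ge_nat].
- exact: continuous_pwlin.
have d_up k : dominating_seq A k <= dominating_seq A k.+1 by exact/ltW/dominating_seq_lt.
move=> [|n] m nm.
  rewrite ler_wpDl ?ler_norm // -[0]/(dominating_seq A 0) -[X in X <= _](pwlin_nat _ 0).
  exact: pwlin_le.
rewrite ler_wpDr // (le_trans (dominating_seq_ge A (ltn0Sn n))) //.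
by rewrite -pwlin_nat pwlin_le.
Qed.

Definition decay_rate (l : R -> R) : Prop :=
  [/\ continuous l, (forall t, 0 <= t -> 0 < l t),
      (forall s t, 0 <= s -> s <= t -> l t <= l s) & l t @[t --> +oo] --> 0].

Lemma classKL_mul (k l : R -> R) a : 0 < a -> continuous k -> classK k ->
  decay_rate l -> classKL (fun r t => k (a * r) * l t).
Proof.
move=> a0 k_cont kK [l_cont l_pos l_down l_lim]; have [_ k0 k_up] := kK; split.
  move=> t t0; split.
  - apply: continuous_subspaceT => x; apply: cvgM; last exact: cvg_cst.
    apply: (@continuous_comp R R R ( *%R a) k); last exact: k_cont.
    by apply: cvgM; [exact: cvg_cst | exact: cvg_id].
  - by rewrite mulr0 k0 mul0r.
  - move=> r s r0 rs; rewrite ltr_pM2r ?l_pos //.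
    by apply: k_up; [rewrite mulr_ge0 // ltW | rewrite ltr_pM2l].
move=> r r0; have kr : 0 <= k (a * r) by rewrite (classK_ge0 kK) // mulr_ge0 // ltW.
split.
- apply: continuous_subspaceT => x; apply: cvgM; [exact: cvg_cst | exact: l_cont].
- by move=> s t s0 st; rewrite ler_wpM2l // l_down.
- by rewrite -(mulr0 (k (a * r))); apply: cvgM; [exact: cvg_cst | exact: l_lim].
Qed.

End ComparisonFunctions.

Section DecayEnvelope.
Variable R : realType.

Definition limsup_le0 (D : R -> R) : Prop :=
  forall eps, 0 < eps -> exists T, forall t, T <= t -> D t <= eps.

Lemma sup_envelope (S : set (R * R)) (M : R) :
  (forall p, S p -> p.2 <= M) ->
  (forall eps, 0 < eps -> exists T, forall p, S p -> T <= p.1 -> p.2 <= eps) ->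
  exists D : R -> R, [/\ forall t, 0 <= D t, {homo D : s t /~ s <= t},
    limsup_le0 D & forall p, S p -> p.2 <= D p.1].
Proof.
move=> S_le S_tail.
pose E t0 := [set z | z = 0 \/ exists s, t0 <= s /\ S (s, z)].
have E_ub t0 : has_ubound (E t0).
  by exists (Num.max M 0) => z [->|[s [_ /S_le]]]; rewrite le_max ?lexx ?orbT // => ->.
have E0 t0 : E t0 0 by left.
exists (fun t0 => sup (E t0)); split.
- by move=> t0; exact: ub_le_sup (E_ub t0) _ (E0 t0).
- move=> t s st /=; apply: ge_sup; first by exists 0.
  move=> z [->|[r [tr Srz]]]; first exact: ub_le_sup (E_ub s) _ (E0 s).
  by apply: ub_le_sup (E_ub s) _ _; right; exists r; split => //; exact: le_trans tr.
- move=> eps e0; have [T HT] := S_tail eps e0; exists T => t Tt.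
  apply: ge_sup; first by exists 0.
  by move=> z [->|[s [ts Ssz]]]; [exact: ltW | exact: HT Ssz (le_trans Tt ts)].
- by case=> t z Stz; apply: ub_le_sup (E_ub t) _ _; right; exists t.
Qed.

Lemma decay_rate_majorant (D : R -> R) : (forall t, 0 <= D t) ->
  {homo D : s t /~ s <= t} -> limsup_le0 D ->
  exists l, decay_rate l /\ forall t, 0 <= t -> D t <= l t.
Proof.
move=> D_ge0 D_down D_tail.
(* The shift by one makes the interpolant of q dominate D on each [k, k + 1]. *)
pose q (k : nat) := D (k%:R - 1) + (k%:R + 1)^-1.
have q_pos k : 0 < q k by rewrite ltr_wpDl // invr_gt0 ltr_wpDl.
have q_down k : q k.+1 <= q k.
  rewrite lerD ?D_down ?lerD2r ?ler_nat //.
  by rewrite lef_pV2 ?posrE ?ltr_wpDl // lerD2r ler_nat.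
have q_le t : 0 <= t -> q (Num.truncn t).+1 <= pwlin q t.
  move=> t0; have /andP[kt tk] := truncn_itv t0.
  rewrite (pwlin_segment _ kt (ltW tk)); have := q_down (Num.truncn t).
  by move: tk; rewrite -natr1; nra.
exists (pwlin q); split; first split.
- exact: continuous_pwlin.
- by move=> t t0; exact: lt_le_trans (q_pos _) (q_le t t0).
- by move=> s t s0 st; exact: pwlin_ge.
- apply/cvgrPdist_le => eps e0; have [T HT] := D_tail (eps / 2) ltac:(by rewrite divr_gt0).
  set K := (Num.truncn (Num.max (T + 1) (2 / eps))).+1.
  have := truncnS_gt (Num.max (T + 1) (2 / eps)); rewrite -/K gt_max => /andP[TK eK].
  exists K%:R; split; first exact: num_real.
  move=> t Kt; have t0 : 0 <= t by exact: le_trans (ltW Kt).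
  rewrite sub0r normrN ger0_norm; last exact: le_trans (ltW (q_pos _)) (q_le t t0).
  apply: le_trans (pwlin_ge q_down (ltW Kt)) _; rewrite pwlin_nat /q.
  have DK : D (K%:R - 1) <= eps / 2 by apply: HT; lra.
  have invK : (K%:R + 1)^-1 <= eps / 2.
    rewrite -[eps / 2]invf_div lef_pV2 ?posrE ?ltr_wpDl ?divr_gt0 //; lra.
  lra.
move=> t t0; have /andP[kt _] := truncn_itv t0.
apply: le_trans (q_le t t0); rewrite /q -natr1 addrK.
by rewrite ler_wpDr ?D_down // invr_ge0 ler_wpDl.
Qed.

Lemma decay_rate_envelope (S : set (R * R)) (M : R) :
  (forall p, S p -> p.2 <= M) ->
  (forall eps, 0 < eps -> exists T, forall p, S p -> T <= p.1 -> p.2 <= eps) ->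
  exists l, decay_rate l /\ forall p, S p -> 0 <= p.1 -> p.2 <= l p.1.
Proof.
move=> S_le S_tail; have [D [D_ge0 D_down D_tail S_D]] := sup_envelope S_le S_tail.
have [l [l_decay D_l]] := decay_rate_majorant D_ge0 D_down D_tail.
by exists l; split => // p Sp p0; exact: le_trans (S_D p Sp) (D_l _ p0).
Qed.

End DecayEnvelope.

Lemma classK_shift_majorant (R : realType) (B : R -> R) :
  (forall r, 0 <= r -> 0 <= B r) -> (forall r s, 0 <= r -> r <= s -> B r <= B s) ->
  exists k, [/\ continuous k, classK k &
    forall r, 0 <= r -> Num.max 1 r * B r <= k (r + 1)].
Proof.
move=> B_ge0 B_up; pose A (n : nat) := n%:R * B n%:R.
have [k [[kK _] k_cont A_k]] := classKinf_majorant A.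
exists k; split => // r r0; have /andP[nr rn] := truncn_itv r0.
set n := Num.truncn r in nr rn.
have An : A n.+1 <= k (r + 1).
  by have := A_k n.+1 (r + 1); rewrite /A mul0r normr0 addr0 -natr1 lerD2r; apply.
apply: le_trans An; apply: ler_pM; rewrite ?le_max ?ler01 ?B_ge0 //.
  by rewrite ge_max ler1n ltW.
by rewrite B_up // ltW.
Qed.

Section Time.
Variables (R : realType) (disc : bool).

Lemma time_ge0 (t : time R disc) : 0 <= sval t.
Proof. by case: t => x /=; rewrite /time_pred; case: disc => [[n ->]|]. Qed.

Lemma exists_time_ge (T : R) : exists tau : time R disc, T <= sval tau.
Proof.
set n := (Num.truncn `|T|).+1.
have n_time : time_pred disc (n%:R : R) by case: disc => /=; [exists n | exact: ler0n].
exists (exist _ _ n_time) => /=.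
exact/ltW/(le_lt_trans (ler_norm T))/truncnS_gt.
Qed.

End Time.

Section OutputStability.
Variables (R : realType) (disc : bool) (X : normedModType R) (U : lmodType R)
  (Y : normedModType R) (Uset : set (time R disc -> U))
  (nu : (time R disc -> U) -> R) (phi : time R disc -> X -> (time R disc -> U) -> X)
  (h : X -> U -> Y).
Hypothesis nu_ge0 : forall u, Uset u -> 0 <= nu u.

Local Notation y := (yout phi h).
Local Notation OUAG := (OUAG Uset nu phi h).
Local Notation OGUAG := (OGUAG Uset nu phi h).
Local Notation BORS := (BORS Uset nu phi h).
Local Notation OUGB := (OUGB Uset nu phi h).
Local Notation OCAG := (OCAG Uset nu phi h).
Local Notation IOpS := (IOpS Uset nu phi h).

Lemma OUGB_BORS : OUGB -> BORS.
Proof.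
move=> [sg [ga [c [sgK [gaK [_ y_le]]]]]]; rewrite /Defs.BORS /= => C tau C0.
exists (sg C + ga C + c) => x u t xC uU uC _.
apply: le_trans (y_le x u t uU) _; rewrite lerD2r lerD //.
  exact: classK_le sgK.1 _ (ltW xC).
exact: classK_le gaK.1 (nu_ge0 uU) (ltW uC).
Qed.

Lemma OGUAG_OUAG : OGUAG -> OUAG.
Proof.
move=> [ga [gaK y_att]]; rewrite /Defs.OUAG /=; exists ga; split => // eps r s e0 r0 _.
by have [tau Htau] := y_att eps r e0 r0; exists tau => x u t xr uU _; exact: Htau.
Qed.

Definition bounded_on_bounded_sets : Prop :=
  forall C, 0 < C -> exists M, forall x u t,
    `|x| < C -> Uset u -> nu u < C -> `|y t x u| <= M.

Lemma OUAG_BORS_bounded : OUAG -> BORS -> bounded_on_bounded_sets.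
Proof.
move=> [ga [gaK y_att]] y_bnd C C0.
have [tau Htau] := y_att 1 C C ltr01 C0 C0; have [M HM] := y_bnd C tau C0.
exists (Num.max M (1 + ga C)) => x u t xC uU uC; rewrite le_max.
have [tt|tt] := ltrP (sval t) (sval tau); first by rewrite HM.
apply/orP; right; apply: le_trans (Htau x u t xC uU uC tt) _.
by rewrite lerD2l (classK_le gaK.1 (nu_ge0 uU) (ltW uC)).
Qed.

Lemma OCAG_bounded : OCAG -> bounded_on_bounded_sets.
Proof.
move=> [b [ga [c [[bK b_down] [gaK [c0 y_le]]]]]] C C0.
exists (b (C + c) 0 + ga C) => x u t xC uU uC.
apply: le_trans (y_le x u t uU) _; apply: lerD.
  have [_ b_dec _] := b_down (`|x| + c) (addr_ge0 (normr_ge0 x) c0).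
  apply: le_trans (b_dec 0 _ (lexx 0) (time_ge0 t)) _.
  by apply: (classK_le (bK 0 (lexx 0))); rewrite ?addr_ge0 // lerD2r ltW.
exact: classK_le gaK.1 (nu_ge0 uU) (ltW uC).
Qed.

Lemma bounded_OUGB : bounded_on_bounded_sets -> OUGB.
Proof.
move=> y_bnd.
have /choice[A HA] (n : nat) : exists M, forall x u t,
    `|x| < n.+1%:R -> Uset u -> nu u < n.+1%:R -> `|y t x u| <= M.
  exact: y_bnd.
have [sg [sgK _ A_sg]] := classKinf_majorant A.
exists sg, sg, (`|A 0%N| + 1); split => //; split => //; split; first exact: ltr_pwDr.
move=> x u t uU; set m := Num.max `|x| (nu u).
have m0 : 0 <= m by rewrite le_max normr_ge0.
have /andP[nm] := truncn_itv m0; rewrite gt_max => /andP[xn un].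
have := HA _ x u t xn uU un.
move/le_trans/(_ (A_sg _ _ nm)).
have := classK_max sgK.1 (normr_ge0 x) (nu_ge0 uU); lra.
Qed.

(* Inputs with nu u >= sg r + c + 1 are covered by OUGB, thanks to the identity
   summand of the new gain. *)
Lemma OUAG_OUGB_OGUAG : OUAG -> OUGB -> OGUAG.
Proof.
move=> [g1 [g1K y_att]] [sg [g2 [c [sgK [g2K [c0 y_le]]]]]].
rewrite /Defs.OGUAG /=; exists (g1 \+ g2 \+ id); split.
  by apply: classKinf_add; [exact: classKinf_add | exact: classKinf_id].
move=> eps r e0 r0; have sgr := classK_ge0 sgK.1 (ltW r0).
have [tau Htau] := y_att eps r (sg r + c + 1) e0 r0 ltac:(lra).
exists tau => x u t xr uU tt /=.
have := nu_ge0 uU; have := classK_ge0 g1K.1 (nu_ge0 uU).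
have := classK_ge0 g2K.1 (nu_ge0 uU).
have [small|large] := ltrP (nu u) (sg r + c + 1).
  by have := Htau x u t xr uU small tt; lra.
have := y_le x u t uU; have := classK_le sgK.1 (normr_ge0 x) (ltW xr); lra.
Qed.

Lemma OCAG_OGUAG : OCAG -> OGUAG.
Proof.
move=> [b [ga [c [[bK b_down] [gaK [c0 y_le]]]]]].
rewrite /Defs.OGUAG /=; exists ga; split => // eps r e0 r0.
have [_ _ b_lim] := b_down (r + c) ltac:(lra).
have [M [_ HM]] := iffLR (cvgrPdist_le _ _) b_lim eps e0.
have [tau tau_ge] := exists_time_ge disc (`|M| + 1).
exists tau => x u t xr uU tt.
have Mt : M < sval t by have := ler_norm M; lra.
have := HM _ Mt; rewrite sub0r normrN => /(le_trans (ler_norm _)) b_eps.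
have xcr : `|x| + c <= r + c by rewrite lerD2r ltW.
have := classK_le (bK _ (time_ge0 t)) (addr_ge0 (normr_ge0 x) c0) xcr.
have := y_le x u t uU; lra.
Qed.

Lemma OGUAG_OUGB_excess : OGUAG -> OUGB -> exists k ga,
  [/\ continuous k, classK k, classKinf ga,
      (forall x u t, Uset u -> `|y t x u| - ga (nu u) <= k (`|x| + 1)) &
      (forall eps, 0 < eps -> exists T, forall x u t, Uset u -> T <= sval t ->
         `|y t x u| - ga (nu u) <= eps * k (`|x| + 1))].
Proof.
move=> [g1 [g1K y_att]] [sg [g2 [c [sgK [g2K [c0 y_le]]]]]].
pose B r := sg r + c + 1.
have B_ge1 r : 0 <= r -> 1 <= B r.
  by move=> r0; have := classK_ge0 sgK.1 r0; rewrite /B; lra.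
have B_up r s : 0 <= r -> r <= s -> B r <= B s.
  by move=> r0 rs; rewrite !lerD2r; exact: classK_le sgK.1 r0 rs.
have [k [k_cont kK k_ge]] :=
  classK_shift_majorant (fun r r0 => le_trans ler01 (B_ge1 r r0)) B_up.
have kx_ge (x : X) : 1 <= Num.max 1 `|x| /\ 1 <= B `|x| /\
    Num.max 1 `|x| * B `|x| <= k (`|x| + 1).
  by rewrite le_max lexx B_ge1 // k_ge.
have e_le x u t : Uset u -> `|y t x u| - (g1 \+ g2) (nu u) <= B `|x| - 1.
  move=> uU; have := y_le x u t uU; have := classK_ge0 g1K.1 (nu_ge0 uU).
  by rewrite /B /=; lra.
exists k, (g1 \+ g2); split => //; first exact: classKinf_add.
  by move=> x u t uU; have := e_le x u t uU; have := kx_ge x; nra.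
(* Near states are handled by OGUAG; far ones, with eps |x| >= 1, by the growth of k. *)
move=> eps e0; have ie : 0 <= eps^-1 by rewrite invr_ge0 ltW.
have [tau Htau] := y_att eps (eps^-1 + 1) e0 ltac:(lra).
exists (sval tau) => x u t uU tt; have := kx_ge x.
have [xr|rx] := ltrP `|x| (eps^-1 + 1).
  have [m1 [B1 mB]] := kx_ge x; have k1 := le_trans (mulr_ege1 m1 B1) mB.
  have := Htau x u t xr uU tt; have := classK_ge0 g2K.1 (nu_ge0 uU).
  by rewrite /=; nra.
have ex : 1 <= eps * `|x| by rewrite -(mulfV (lt0r_neq0 e0)) ler_pM2l //; lra.
have -> : Num.max 1 `|x| = `|x| by apply/max_r; lra.
by have := e_le x u t uU; nra.
Qed.

Lemma OGUAG_OUGB_decay : OGUAG -> OUGB -> exists k l ga,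
  [/\ continuous k, classK k, decay_rate l, classKinf ga &
      forall x u t, Uset u -> `|y t x u| <= k (`|x| + 1) * l (sval t) + ga (nu u)].
Proof.
move=> /OGUAG_OUGB_excess/[apply] -[k [ga [k_cont kK gaK e_le e_tail]]].
have k_pos (x : X) : 0 < k (`|x| + 1).
  by have [_ k0 k_up] := kK; rewrite -k0; apply: k_up.
pose S := [set p | exists x u t,
  Uset u /\ p = (sval t, (`|y t x u| - ga (nu u)) / k (`|x| + 1))].
have S_le1 p : S p -> p.2 <= 1.
  by move=> [x [u [t [uU ->]]]]; rewrite /= ler_pdivrMr // mul1r e_le.
have S_tail eps : 0 < eps -> exists T, forall p, S p -> T <= p.1 -> p.2 <= eps.
  move=> e0; have [T HT] := e_tail eps e0; exists T => _ [x [u [t [uU ->]]]] /= tt.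
  by rewrite ler_pdivrMr // HT.
have [l [l_decay S_l]] := decay_rate_envelope S_le1 S_tail.
exists k, l, ga; split => // x u t uU.
have /= := S_l _ (ex_intro _ x (ex_intro _ u (ex_intro _ t (conj uU erefl)))).
by rewrite ler_pdivrMr // => /(_ (time_ge0 t)); lra.
Qed.

Lemma OGUAG_OUGB_OCAG : OGUAG -> OUGB -> OCAG.
Proof.
move=> /OGUAG_OUGB_decay/[apply] -[k [l [ga [k_cont kK l_decay gaK y_le]]]].
exists (fun r t => k (1 * r) * l t), ga, 1; split; first exact: classKL_mul.
by split => //; split => // x u t uU; rewrite mul1r; exact: y_le.
Qed.

(* Split k (|x| + 1) <= k (2 |x|) + k 2; the second part, times l t <= l 0, is the constant. *)
Lemma OGUAG_OUGB_IOpS : OGUAG -> OUGB -> IOpS.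
Proof.
move=> /OGUAG_OUGB_decay/[apply] -[k [l [ga [k_cont kK l_decay gaK y_le]]]].
exists (fun r t => k (2 * r) * l t), ga, (k 2 * l 0); split.
  exact: classKL_mul.
have [_ l_pos l_down _] := l_decay; have k2 : 0 <= k 2 := classK_ge0 kK (ler0n R 2).
split => //; split; first by rewrite mulr_ge0 // ltW // l_pos.
move=> x u t uU; have x0 := normr_ge0 x; have t0 := time_ge0 t.
have k_split : k (`|x| + 1) <= k (2 * `|x|) + k 2.
  apply: le_trans (classK_max kK (mulr_ge0 (ler0n R 2) x0) (ler0n R 2)).
  apply: classK_le kK (addr_ge0 x0 ler01) _; rewrite le_max.
  by have [] := lerP `|x| 1 => ?; apply/orP; [right | left]; lra.
have := y_le x u t uU; have := l_down 0 (sval t) (lexx 0) t0; have := l_pos _ t0.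
have := classK_ge0 kK (addr_ge0 x0 ler01); have := classK_ge0 kK (mulr_ge0 (ler0n R 2) x0).
nra.
Qed.

End OutputStability.

Unset Implicit Arguments.

Theorem proposition1 (R : realType) (disc : bool) (X : normedModType R)
  (U : lmodType R) (Y : normedModType R) (Uset : set (time R disc -> U))
  (nu : (time R disc -> U) -> R)
  (phi : time R disc -> X -> (time R disc -> U) -> X) (h : X -> U -> Y) :
  control_system Uset nu phi ->
  [/\ (OUAG Uset nu phi h /\ BORS Uset nu phi h) <->
        (OGUAG Uset nu phi h /\ OUGB Uset nu phi h),
      (OGUAG Uset nu phi h /\ OUGB Uset nu phi h) <-> OCAG Uset nu phi h &
      (OCAG Uset nu phi h -> IOpS Uset nu phi h)].
Proof.
move=> [[_ [[nu_norm _ _] _]] _ _ _].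
have nu_ge0 u : Uset u -> 0 <= nu u by move=> /nu_norm[].
have OCAG_OUGB : OCAG Uset nu phi h -> OUGB Uset nu phi h.
  by move=> /(OCAG_bounded nu_ge0); exact: bounded_OUGB.
split.
- split=> [[ouag bors]|[oguag ougb]]; last first.
    by split; [exact: OGUAG_OUAG | exact: OUGB_BORS].
  have ougb := bounded_OUGB nu_ge0 (OUAG_BORS_bounded nu_ge0 ouag bors).
  by split=> //; exact: OUAG_OUGB_OGUAG.
- split=> [[oguag ougb]|ocag]; first exact: OGUAG_OUGB_OCAG.
  by split; [exact: OCAG_OGUAG | exact: OCAG_OUGB].
- by move=> ocag; apply: (OGUAG_OUGB_IOpS nu_ge0); [exact: OCAG_OGUAG | exact: OCAG_OUGB].
Qed.
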